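(* Let $\{(x_i,y_i)\}_{i=1}^n\subset\mathcal X\times\mathcal Y$ be a dataset, let $\alpha\in(0,1)$, and let $\mathcal F$ be a nonempty family of deterministic classifiers $F:\mathcal X\to\mathcal Y$. For $F\in\mathcal F$ define the empirical zero-one risk $$\hat{\mathcal R}(F)=\frac1n\sum_{i=1}^n \mathbf 1_{\{F(x_i)\neq y_i\}}$$ and the $\alpha$-CVaR zero-one loss $$\mathrm{CVaR}_\alpha(F)=\max_{w\in\Delta_n,\ w_i\le \frac{1}{\alpha n}\ \forall i}\ \sum_{i=1}^n w_i\,\mathbf 1_{\{F(x_i)\neq y_i\}},$$ where $\Delta_n=\{w\in\mathbb R^n: w_i\ge 0,\ \sum_i w_i=1\}$. Let $F^*_{\mathrm{ERM}}=\arg\min_{F\in\mathcal F}\hat{\mathcal R}(F)$ and $F^*_{\mathrm{CVaR}_\alpha}=\arg\min_{F\in\mathcal F}\mathrm{CVaR}_\alpha(F)$. Then for every $F\in\mathcal F$ and every $F^*\in F^*_{\mathrm{ERM}}$ we have $\mathrm{CVaR}_\alpha(F)\ge \mathrm{CVaR}_\alpha(F^* )$. Moreover, if $\min_{F\in\mathcal F}\hat{\mathcal R}(F)<\alpha$, then $F^*_{\mathrm{ERM}}=F^*_{\mathrm{CVaR}_\alpha}$.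
   Context: A deterministic classifier is a fixed map $F:\mathcal X\to\mathcal Y$. The zero-one loss is $\ell_{0/1}(\hat y,y)=\mathbf 1_{\{\hat y\neq y\}}$. *)

From HB Require Import structures.
From mathcomp Require Import all_boot all_order all_algebra.
From mathcomp Require Import boolp classical_sets reals.
Set Implicit Arguments. Unset Strict Implicit. Unset Printing Implicit Defensive.
Import Order.TTheory GRing.Theory Num.Theory.
Local Open Scope ring_scope.
Local Open Scope classical_set_scope.

Section Defs.
Variables (R : realType) (X : Type) (Y : eqType) (n : nat).
Variables (x : 'I_n -> X) (y : 'I_n -> Y).

Definition loss01 (F : X -> Y) (i : 'I_n) : R := (F (x i) != y i)%:R.

Definition emp_risk (F : X -> Y) : R := n%:R^-1 * \sum_(i < n) loss01 F i.

Definition cvar_weights (alpha : R) : set ('I_n -> R) :=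
  [set w | (forall i, 0 <= w i) /\ \sum_(i < n) w i = 1 /\
           (forall i, w i <= (alpha * n%:R)^-1)].

(* alpha-CVaR zero-one loss: the max (taken as sup; it is attained) *)
Definition cvar01 (alpha : R) (F : X -> Y) : R :=
  sup [set \sum_(i < n) w i * loss01 F i | w in cvar_weights alpha].

Definition argmin_on (Fam : set (X -> Y)) (J : (X -> Y) -> R) : set (X -> Y) :=
  [set F | Fam F /\ forall G, Fam G -> J F <= J G].

Definition ERM_set (Fam : set (X -> Y)) := argmin_on Fam emp_risk.
Definition CVaR_set (alpha : R) (Fam : set (X -> Y)) := argmin_on Fam (cvar01 alpha).
End Defs.

From mathcomp Require Import all_boot all_order all_algebra.
From mathcomp Require Import classical_sets reals.
From mathcomp Require Import lra.

Set Implicit Arguments.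
Unset Strict Implicit.
Unset Printing Implicit Defensive.
Import Order.TTheory GRing.Theory Num.Theory.
Local Open Scope ring_scope.
Local Open Scope classical_set_scope.

(* With k mistakes among n samples, a feasible weight vector puts mass at most
   1/(alpha n) on each mistake and total mass 1, and the better of these two
   bounds is attained, so CVaR_alpha(F) = min(1, R(F)/alpha).  This is a
   nondecreasing function of the empirical risk R(F), strictly increasing
   below alpha, so ERM minimisers minimise CVaR, and conversely once the
   minimal risk is below alpha. *)

Lemma sup_eq_max (R : realType) (E : set R) (v : R) :
  E v -> ubound E v -> sup E = v.
Proof.
move=> Ev ubv; apply/le_anti/andP; split; first by apply: ge_sup => //; exists v.
by apply: sup_upper_bound => //; split; exists v.
Qed.

Section CappedSimplex.
Variables (R : realType) (n : nat) (alpha : R).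

Lemma capped_weighted_sum_le (w l : 'I_n -> R) :
  cvar_weights alpha w -> (forall i, 0 <= l i <= 1) ->
  \sum_i w i * l i <= Num.min 1 ((\sum_i l i) / (alpha * n%:R)).
Proof.
move=> [w_ge0 [w_sum1 w_cap]] l01; rewrite le_min; apply/andP; split.
  rewrite -w_sum1; apply: ler_sum => i _; rewrite ler_piMr //.
  by case/andP: (l01 i).
rewrite mulr_suml; apply: ler_sum => i _; rewrite mulrC ler_wpM2l //.
by case/andP: (l01 i).
Qed.

Variable b : 'I_n -> bool.

Let bool_01 i : 0 <= ((b i)%:R : R) <= 1.
Proof. by case: (b i); rewrite ?lexx ?ler01. Qed.

Let bool_mulK i : (b i)%:R * (b i)%:R = (b i)%:R :> R.
Proof. by case: (b i); rewrite ?mulr0 ?mulr1. Qed.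

Lemma capped_weighted_sum01_attains1 :
  1 < (\sum_i (b i)%:R) / (alpha * n%:R) ->
  exists2 w, cvar_weights alpha w & \sum_i w i * (b i)%:R = 1.
Proof.
set k := \sum_i (b i)%:R => kc_gt1.
have k_ge0 : 0 <= k by apply: sumr_ge0 => i _; case/andP: (bool_01 i).
have k_gt0 : 0 < k.
  by rewrite lt_def k_ge0 andbT; apply: contraTneq kc_gt1 => ->; rewrite mul0r ltr10.
exists (fun i => (b i)%:R / k).
  split; [|split]; first by move=> i; rewrite divr_ge0 //; case/andP: (bool_01 i).
    by rewrite -mulr_suml -/k divff // gt_eqF.
  move=> i; rewrite ler_pdivrMr // mulrC; apply: le_trans (ltW kc_gt1).
  by case/andP: (bool_01 i).
under eq_bigr => i _ do rewrite mulrAC bool_mulK.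
by rewrite -mulr_suml -/k divff // gt_eqF.
Qed.

Hypotheses (n_gt0 : (0 < n)%N) (alpha_gt0 : 0 < alpha) (alpha_le1 : alpha <= 1).

Lemma capped_weighted_sum01_attains_ratio :
  (\sum_i (b i)%:R) / (alpha * n%:R) <= 1 ->
  exists2 w, cvar_weights alpha w &
    \sum_i w i * (b i)%:R = (\sum_i (b i)%:R) / (alpha * n%:R).
Proof.
set k := \sum_i (b i)%:R; set c := (alpha * n%:R)^-1 => kc_le1.
have k_len : k <= n%:R.
  rewrite -[n in n%:R]card_ord -sumr_const; apply: ler_sum => i _.
  by case/andP: (bool_01 i).
have c_gt0 : 0 < c by rewrite invr_gt0 mulr_gt0 ?ltr0n.
have nc_ge1 : 1 <= n%:R * c.
  by rewrite /c invfM mulrCA divff ?mulr1 ?invf_ge1 ?pnatr_eq0 -?lt0n.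
(* the mistakes get the full cap c, the remaining mass is spread evenly *)
pose s := (1 - k * c) / (n%:R - k).
have s_ge0 : 0 <= s by rewrite divr_ge0 ?subr_ge0.
have [s_mass s_le_c] : (n%:R - k) * s = 1 - k * c /\ s <= c.
  have [k_ltn|k_gen] := ltrP k n%:R.
    split; first by rewrite mulrC divfK // gt_eqF // subr_gt0.
    by rewrite ler_pdivrMr ?subr_gt0 //; lra.
  (* k = n forces alpha = 1, and then s = 0 / 0 = 0 *)
  have kn : k = n%:R by apply/le_anti/andP.
  rewrite /s kn subrr invr0 mulr0 mul0r in kc_le1 *; split; [lra | exact: ltW].
have w_split i : (if b i then c else s) = c * (b i)%:R + s * (1 - (b i)%:R).
  by case: (b i) => /=; lra.
exists (fun i => if b i then c else s).
  split; [|split]; first by move=> i; case: (b i); [exact: ltW | exact: s_ge0].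
    rewrite (eq_bigr _ (fun i _ => w_split i)) big_split /= -!mulr_sumr.
    by rewrite sumrB sumr_const card_ord -/k [s * _]mulrC s_mass; lra.
  by move=> i; case: (b i).
rewrite mulrC mulr_sumr.
by apply: eq_bigr => i _; case: (b i) => /=; lra.
Qed.

Lemma sup_capped_weighted_sum01 :
  sup [set \sum_i w i * (b i)%:R | w in cvar_weights alpha] =
    Num.min 1 ((\sum_i (b i)%:R) / (alpha * n%:R)).
Proof.
have [w w_feasible w_max] : exists2 w, cvar_weights alpha w &
    \sum_i w i * (b i)%:R = Num.min 1 ((\sum_i (b i)%:R) / (alpha * n%:R)).
  have [ratio_le1|ratio_gt1] := lerP ((\sum_i (b i)%:R) / (alpha * n%:R)) 1.
    exact: capped_weighted_sum01_attains_ratio.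
  exact: capped_weighted_sum01_attains1.
apply: sup_eq_max; first by exists w.
by move=> _ [v v_feasible <-]; apply: capped_weighted_sum_le.
Qed.

End CappedSimplex.

Lemma cvar01_emp_risk (R : realType) X (Y : eqType) n (x : 'I_n -> X)
    (y : 'I_n -> Y) (alpha : R) (F : X -> Y) :
  (0 < n)%N -> 0 < alpha -> alpha <= 1 ->
  cvar01 x y alpha F = Num.min 1 (emp_risk R x y F / alpha).
Proof.
move=> n_gt0 alpha_gt0 alpha_le1.
rewrite /cvar01 /loss01 sup_capped_weighted_sum01 // /emp_risk /loss01.
by congr (Num.min 1 _); rewrite invfM mulrA mulrC mulrA.
Qed.

Section CappedRatio.
Variables (R : realFieldType) (alpha : R).
Hypothesis alpha_gt0 : 0 < alpha.

Lemma le_min1_divr : {homo (fun r => Num.min 1 (r / alpha)) : a b / a <= b}.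
Proof. by move=> a b le_ab; apply: le_min2 => //; rewrite ler_pM2r ?invr_gt0. Qed.

Lemma min1_divr_reflect_le (a b : R) : b < alpha ->
  Num.min 1 (a / alpha) <= Num.min 1 (b / alpha) -> a <= b.
Proof.
move=> b_lt_alpha; have b_lt1 : b / alpha < 1 by rewrite ltr_pdivrMr ?mul1r.
rewrite [Num.min 1 (b / alpha)]min_r ?(ltW b_lt1) // => le_ab.
have a_lt1 : a / alpha < 1.
  by move: (le_lt_trans le_ab b_lt1); rewrite gt_min ltxx.
by move: le_ab; rewrite min_r ?(ltW a_lt1) // ler_pM2r ?invr_gt0.
Qed.
End CappedRatio.

Section ArgminComp.
Variables (R : realType) (X : Type) (Y : eqType) (Fam : set (X -> Y)).
Variables (J K : (X -> Y) -> R) (phi : R -> R).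
Hypothesis K_phiJ : forall F, K F = phi (J F).
Hypothesis phi_homo : {homo phi : a b / a <= b}.

Lemma argmin_on_comp_sub : argmin_on Fam J `<=` argmin_on Fam K.
Proof.
by move=> F [FamF J_min]; split=> // G FamG; rewrite !K_phiJ phi_homo ?J_min.
Qed.

Lemma argmin_on_comp_eq F0 : argmin_on Fam J F0 ->
  (forall a, phi a <= phi (J F0) -> a <= J F0) ->
  argmin_on Fam J = argmin_on Fam K.
Proof.
move=> [FamF0 F0_min] phi_reflect; apply/seteqP; split; first exact: argmin_on_comp_sub.
move=> G [FamG K_min]; split=> // G' FamG'.
by apply: le_trans (F0_min _ FamG'); apply: phi_reflect; rewrite -!K_phiJ K_min.
Qed.
End ArgminComp.

Theorem proposition1 (R : realType) (X : Type) (Y : eqType) (n : nat)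
    (x : 'I_n -> X) (y : 'I_n -> Y) (alpha : R) (Fam : set (X -> Y)) :
  (0 < n)%N -> 0 < alpha -> alpha < 1 -> Fam !=set0 ->
  (forall F Fs, Fam F -> @ERM_set R X Y n x y Fam Fs ->
     @cvar01 R X Y n x y alpha Fs <= @cvar01 R X Y n x y alpha F) /\
  ((exists F0, @ERM_set R X Y n x y Fam F0 /\ @emp_risk R X Y n x y F0 < alpha) ->
     @ERM_set R X Y n x y Fam = @CVaR_set R X Y n x y alpha Fam).
Proof.
move=> n_gt0 alpha_gt0 /ltW alpha_le1 _.
pose phi r := Num.min 1 (r / alpha).
have cvarE F : cvar01 x y alpha F = phi (emp_risk R x y F).
  exact: cvar01_emp_risk.
have phi_homo : {homo phi : a b / a <= b} := le_min1_divr alpha_gt0.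
split=> [F Fs FamF ERM_Fs | [F0 [ERM_F0 F0_lt_alpha]]].
  by have [_ ->] := argmin_on_comp_sub cvarE phi_homo ERM_Fs.
apply: (argmin_on_comp_eq cvarE phi_homo ERM_F0) => a.
exact: min1_divr_reflect_le.
Qed.
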